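(* Let $N\ge3$, let $v_1,\dots,v_N$ and $\beta_1,\dots,\beta_{N-1}$ be variables/constants, $f_n=v_n+v_{n+1}$ (indices mod $N$), and let $T(\lambda)=V_N(\lambda+\beta_{N-1})\cdots V_2(\lambda+\beta_1)V_1(\lambda)=\begin{pmatrix}A(\lambda)&B(\lambda)\\C(\lambda)&D(\lambda)\end{pmatrix}$ with $V_n(\lambda)=\begin{pmatrix}v_n&1\\ \lambda+v_n^2&v_n\end{pmatrix}$. Then there is a polynomial $\tilde A(\lambda)$ such that $A(\lambda)=B(\lambda)v_1+\tilde A(\lambda)\lambda$. Moreover $\tilde A(\lambda)=f_2$ for $N=3$, and for $N\ge4$ $$\tilde A(\lambda)=\prod_{n=2}^{N-2}\Bigl(1+(\lambda+\beta_n)\frac{\partial^2}{\partial f_n\partial f_{n+1}}\Bigr)(f_2\cdots f_{N-1}),$$ while for all $N\ge3$ $$B(\lambda)=\prod_{n=1}^{N-2}\Bigl(1+(\lambda+\beta_n)\frac{\partial^2}{\partial f_n\partial f_{n+1}}\Bigr)(f_1\cdots f_{N-1}).$$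
   Context: In the product formulas the monomial $f_m\cdots f_{N-1}$ is treated as a polynomial in independent variables $f_m,\dots,f_{N-1}$; the commuting differential operators are applied and then $f_n=v_n+v_{n+1}$ is substituted. *)

From HB Require Import structures.
From mathcomp Require Import all_boot all_order all_algebra.
From mathcomp Require Import mpoly.
Set Implicit Arguments. Unset Strict Implicit. Unset Printing Implicit Defensive.
Import Order.TTheory GRing.Theory Num.Theory.
Local Open Scope ring_scope.

Section Lax.
Variable R : comNzRingType.
(* v n = v_n (1-based, n = 1..N),  beta n = beta_n (n = 1..N-1). *)
Variables (v beta : nat -> R).

Definition Vmat (n : nat) (mu : {poly R}) : 'M[{poly R}]_2 :=
  \matrix_(i < 2, j < 2)
    (if (i == 0 :> nat) then (if (j == 0 :> nat) then (v n)%:P else 1)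
     else (if (j == 0 :> nat) then mu + (v n ^+ 2)%:P else (v n)%:P)).

Fixpoint Tprod (n : nat) : 'M[{poly R}]_2 :=
  match n with
  | 0 => 1%:M
  | 1 => Vmat 1 'X
  | k.+1 => Vmat k.+1 ('X + (beta k)%:P) *m Tprod k
  end.

Definition Tmat (N : nat) := Tprod N.
Definition Aent (N : nat) : {poly R} := Tmat N 0 0.
Definition Bent (N : nat) : {poly R} := Tmat N 0 1.

(* Independent formal variables f_0, ..., f_N (we use f_1 .. f_{N-1}),
   polynomials with coefficients in R[lambda]. *)
Definition fvar (N n : nat) : {mpoly {poly R}[N.+1]} := 'X_(inord n).

Definition fmono (N m : nat) : {mpoly {poly R}[N.+1]} :=
  \prod_(m <= k < N) fvar N k.

Definition Lop (N n : nat) (p : {mpoly {poly R}[N.+1]}) : {mpoly {poly R}[N.+1]} :=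
  p + ('X + (beta n)%:P) *: mderiv (inord n) (mderiv (inord n.+1) p).

(* prod_{n=a}^{b} Lop n, applied to p (the operators commute) *)
Definition Lprod (N a b : nat) (p : {mpoly {poly R}[N.+1]}) :=
  foldr (fun n q => @Lop N n q) p (iota a (b.+1 - a)).

Definition fval (N : nat) (i : 'I_N.+1) : {poly R} :=
  (v i + v (if (i : nat) == N then 1%N else (i : nat).+1))%:P.

Definition fsubst (N : nat) (p : {mpoly {poly R}[N.+1]}) : {poly R} :=
  p.@[fval (N:=N)].

End Lax.

From HB Require Import structures.
From mathcomp Require Import all_boot all_order all_algebra.
From mathcomp Require Import mpoly ring zify.
Set Implicit Arguments. Unset Strict Implicit. Unset Printing Implicit Defensive.
Import GRing.Theory.
Local Open Scope ring_scope.

(* Both sides are continuants K(f_a, ..., f_{N-1}) with weights lambda + beta_n.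
   Since row 1 of V_n(mu) M is mu (row 0 of M) + v_n (row 0 of V_n(mu) M), the
   first row of T_n obeys r_{n+2} = f_{n+1} r_{n+1} + (lambda + beta_n) r_n, so
   B and (A - B v_1) / lambda are the continuants starting at f_1 and f_2.
   On the other side, writing P_a for the operator product applied to
   f_a ... f_{N-1}, only the factor with index a sees f_a, and it splits off as
   P_a = f_a P_{a+1} + (lambda + beta_a) P_{a+2}: this is Euler's rule that a
   continuant is the sum over all ways of deleting disjoint adjacent pairs. *)

Section Continuant.
Variables (S : comPzRingType) (g m : nat -> S).

Fixpoint continuant (a k : nat) {struct k} : S :=
  match k with
  | 0 => 1
  | 1 => g a
  | (k'.+1 as k1).+1 => g a * continuant a.+1 k1 + m a * continuant a.+2 k'
  end.

Lemma continuantSS a k :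
  continuant a k.+2 = g a * continuant a.+1 k.+1 + m a * continuant a.+2 k.
Proof. by []. Qed.

Lemma continuantSSr a k :
  continuant a k.+2 = g (a + k.+1) * continuant a k.+1 + m (a + k) * continuant a k.
Proof.
elim/ltn_ind: k a => -[|[|k]] IH a.
- by rewrite /= addn1 addn0; ring.
- by rewrite /= addn2 addn1; ring.
rewrite [LHS]continuantSS (IH k.+1 _ a.+1) // (IH k _ a.+2) //.
rewrite [continuant a k.+3]continuantSS [continuant a k.+2]continuantSS !addSn !addnS.
ring.
Qed.

Lemma continuant_unique (x : nat -> S) (c : S) a :
  x 0%N = c -> x 1%N = c * g a ->
  (forall k, x k.+2 = g (a + k.+1) * x k.+1 + m (a + k) * x k) ->
  forall k, x k = c * continuant a k.
Proof.
move=> x0 x1 x_rec; elim/ltn_ind => -[|[|k]] IH.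
- by rewrite x0 mulr1.
- by rewrite x1.
- by rewrite x_rec continuantSSr !IH //; ring.
Qed.

End Continuant.

Definition fsum (R : comNzRingType) (v : nat -> R) (n : nat) : {poly R} :=
  (v n + v n.+1)%:P.

Definition lambda_shift (R : comNzRingType) (beta : nat -> R) (n : nat) : {poly R} :=
  'X + (beta n)%:P.

Lemma mulmx2E (T : pzSemiRingType) (A B : 'M[T]_2) i j :
  (A *m B) i j = A i 0 * B 0 j + A i 1 * B 1 j.
Proof.
rewrite mxE !big_ord_recl big_ord0 addr0.
by congr (A i _ * B _ j + A i _ * B _ j); apply/val_inj.
Qed.

Section LaxMatrix.
Variables (R : comNzRingType) (v beta : nat -> R).

Lemma Vmat_mulmx_row0 n mu (M : 'M[{poly R}]_2) j :
  (Vmat v n mu *m M) 0 j = (v n)%:P * M 0 j + M 1 j.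
Proof. by rewrite mulmx2E !mxE /= mul1r. Qed.

Lemma Vmat_mulmx_row1 n mu (M : 'M[{poly R}]_2) j :
  (Vmat v n mu *m M) 1 j = mu * M 0 j + (v n)%:P * (Vmat v n mu *m M) 0 j.
Proof. by rewrite !mulmx2E !mxE /= polyC_exp; ring. Qed.

Lemma Tprod_rec n :
  Tprod v beta n.+1 =
  Vmat v n.+1 (if n is 0 then 'X else lambda_shift beta n) *m Tprod v beta n.
Proof. by case: n => [|n] //=; rewrite mulmx1. Qed.

Lemma Tprod_row0_rec n j :
  Tprod v beta n.+2 0 j = fsum v n.+1 * Tprod v beta n.+1 0 j
    + (if n is 0 then 'X else lambda_shift beta n) * Tprod v beta n 0 j.
Proof.
rewrite (Tprod_rec n.+1) Vmat_mulmx_row0 {2}(Tprod_rec n) Vmat_mulmx_row1.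
set mu := (if n is 0 then _ else _).
by rewrite -(Tprod_rec n) /fsum polyCD; ring.
Qed.

Local Notation K := (continuant (fsum v) (lambda_shift beta)).

Lemma Bent_continuant k : Bent v beta k.+1 = K 1 k.
Proof.
have B1 : Tprod v beta 1 0 1 = 1 by rewrite mxE.
have B2 : Tprod v beta 2 0 1 = 1 * fsum v 1.
  by rewrite (Tprod_row0_rec 0 1) B1 !mxE mulr1 mulr0 addr0 mul1r.
rewrite -[RHS]mul1r.
exact: (continuant_unique (x := fun i => Tprod v beta i.+1 0 1) B1 B2
         (fun i => Tprod_row0_rec i.+1 1) k).
Qed.

Lemma Aent_continuant k :
  Aent v beta k.+2 = Bent v beta k.+2 * (v 1%N)%:P + K 2 k * 'X.
Proof.
pose D i := Tprod v beta i 0 0 - Tprod v beta i 0 1 * (v 1%N)%:P.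
have D_rec i : D i.+3 = fsum v i.+2 * D i.+2 + lambda_shift beta i.+1 * D i.+1.
  by rewrite /D (Tprod_row0_rec i.+1 0) (Tprod_row0_rec i.+1 1); ring.
have D1 : D 1%N = 0 by rewrite /D /= /Vmat !mxE /= mul1r subrr.
have D2 : D 2%N = 'X.
  by rewrite /D !(Tprod_row0_rec 0) /= /Vmat !mxE /=; ring.
have D3 : D 3%N = 'X * fsum v 2 by rewrite D_rec D2 D1 mulr0 addr0 mulrC.
have := continuant_unique (x := fun i => D i.+2) D2 D3 (fun i => D_rec i.+1) k.
by move/eqP; rewrite subr_eq mulrC addrC => /eqP.
Qed.

End LaxMatrix.

Lemma mderivXU (T : nzRingType) n (i j : 'I_n) :
  mderiv j ('X_i : {mpoly T[n]}) = (i == j)%:R.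
Proof.
rewrite mderivX mnm1E; case: eqP => [->|_]; last by rewrite scale0r.
by rewrite -{1}[U_(j)%MM]add0m addmK mpolyX0 scale1r.
Qed.

Section LOperators.
Variables (R : comNzRingType) (beta : nat -> R) (N : nat).
Local Notation MP := {mpoly {poly R}[N.+1]}.

Lemma mderiv_fvar i j : (i <= N)%N -> (j <= N)%N ->
  mderiv (inord j) (fvar R N i) = (i == j)%:R.
Proof.
by move=> iN jN; rewrite mderivXU -(inj_eq val_inj) /= !inordK.
Qed.

Lemma mderiv_fmono j a : (j < a)%N -> (j <= N)%N ->
  mderiv (inord j) (fmono R N a) = 0.
Proof.
move=> ja jN; rewrite /fmono big_seq.
apply: (big_ind (fun p : MP => mderiv (inord j) p = 0)).
- by rewrite -mpolyC1 mderivC.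
- by move=> p q dp dq; rewrite mderivM dp dq mul0r mulr0 addr0.
move=> k; rewrite mem_index_iota => /andP[ak kN].
by rewrite mderiv_fvar ?(ltnW kN) // gtn_eqF // (leq_trans ja ak).
Qed.

Lemma mderiv_Lop i n (p : MP) : mderiv i (Lop beta n p) = Lop beta n (mderiv i p).
Proof.
by rewrite /Lop mderivD mderivZ !(mderiv_comm _ i).
Qed.

Lemma mderiv_Lprod i a b (p : MP) :
  mderiv i (Lprod beta a b p) = Lprod beta a b (mderiv i p).
Proof. by rewrite /Lprod; elim: iota => //= n s IH; rewrite mderiv_Lop IH. Qed.

Lemma Lop_id n (p : MP) : mderiv (inord n) p = 0 -> Lop beta n p = p.
Proof. by move=> dp; rewrite /Lop mderiv_comm dp mderiv0 scaler0 addr0. Qed.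

Lemma Lprod0 a b : Lprod beta a b (0 : MP) = 0.
Proof. by rewrite /Lprod; elim: iota => //= n s ->; rewrite Lop_id ?mderiv0. Qed.

Lemma LopMl n (q p : MP) :
  mderiv (inord n) q = 0 -> mderiv (inord n.+1) q = 0 ->
  Lop beta n (q * p) = q * Lop beta n p.
Proof.
move=> dq dq1; rewrite /Lop !mderivM dq1 mul0r add0r mderivM dq mul0r add0r.
by rewrite mulrDr scalerAr.
Qed.

Lemma Lprod_cons a b (p : MP) : (a <= b)%N ->
  Lprod beta a b p = Lop beta a (Lprod beta a.+1 b p).
Proof. by move=> ab; rewrite /Lprod subSn. Qed.

Lemma Lprod_nil a b (p : MP) : (b < a)%N -> Lprod beta a b p = p.
Proof. by move=> ba; rewrite /Lprod (eqP ba). Qed.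

Lemma LprodMl a b (q p : MP) :
  (forall i, (a <= i <= b.+1)%N -> mderiv (inord i) q = 0) ->
  Lprod beta a b (q * p) = q * Lprod beta a b p.
Proof.
move=> dq; rewrite /Lprod.
have : all (fun n => a <= n <= b)%N (iota a (b.+1 - a)).
  by apply/allP => n; rewrite mem_iota; lia.
elim: iota => //= n s IH /andP[/andP[an nb] s_ab].
by rewrite IH // LopMl // dq //; lia.
Qed.

Lemma fmonoS a : (a < N)%N -> fmono R N a = fvar R N a * fmono R N a.+1.
Proof. by move=> aN; rewrite /fmono big_ltn. Qed.

Definition Lfmono a : MP := Lprod beta a (N - 2) (fmono R N a).

Lemma mderiv_Lfmono j a : (j < a)%N -> (j <= N)%N -> mderiv (inord j) (Lfmono a) = 0.
Proof. by move=> ja jN; rewrite mderiv_Lprod mderiv_fmono // Lprod0. Qed.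

Lemma mderiv_Lfmono_self a : (a < N)%N -> mderiv (inord a) (Lfmono a) = Lfmono a.+1.
Proof.
move=> aN; have aN' := ltnW aN.
rewrite /Lfmono mderiv_Lprod fmonoS // mderivM mderiv_fvar // eqxx mul1r.
rewrite mderiv_fmono // mulr0 addr0.
have [aN2|N2a] := leqP a (N - 2); last by rewrite !Lprod_nil //; lia.
by rewrite Lprod_cons // Lop_id //; apply: (mderiv_Lfmono (ltnSn a) aN').
Qed.

Lemma Lfmono_rec a : (a.+2 <= N)%N ->
  Lfmono a = fvar R N a * Lfmono a.+1 + lambda_shift beta a *: Lfmono a.+2.
Proof.
move=> aN; have aN' : (a <= N)%N by lia.
have fa_indep i : (a < i <= N)%N -> mderiv (inord i) (fvar R N a) = 0.
  by case/andP=> ai iN; rewrite mderiv_fvar // ltn_eqF.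
have dfa : mderiv (inord a) (fvar R N a) = 1 by rewrite mderiv_fvar // eqxx.
rewrite {1}/Lfmono Lprod_cons; last by lia.
rewrite fmonoS; last by lia.
rewrite LprodMl -/(Lfmono a.+1); last by move=> i ?; apply: fa_indep; lia.
rewrite /Lop -/(lambda_shift beta a) mderivM fa_indep ?mul0r ?add0r; last by lia.
rewrite mderiv_Lfmono_self // mderivM dfa mul1r.
by rewrite (mderiv_Lfmono (leqnSn a.+1) aN') mulr0 addr0.
Qed.

End LOperators.

Lemma fsubst_fvar (R : comNzRingType) (v : nat -> R) N a : (a < N)%N ->
  fsubst v (fvar R N a) = fsum v a.
Proof. by move=> aN; rewrite /fsubst mevalXU /fval inordK ?ltn_eqF // ltnW. Qed.

Lemma fsubst_Lfmono (R : comNzRingType) (v beta : nat -> R) N k a :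
  (2 <= N)%N -> (a + k)%N = N ->
  fsubst v (Lfmono beta N a) = continuant (fsum v) (lambda_shift beta) a k.
Proof.
move=> N2; elim/ltn_ind: k a => -[|[|k]] IH a akN.
- rewrite /Lfmono Lprod_nil; last by lia.
  rewrite /fmono big_geq; last by lia.
  by rewrite /fsubst -mpolyC1 mevalC.
- rewrite /Lfmono Lprod_nil; last by lia.
  rewrite fmonoS; last by lia.
  by rewrite /fmono big_geq ?mulr1 ?fsubst_fvar //; lia.
rewrite Lfmono_rec; last by lia.
rewrite /fsubst mevalD mevalM mevalZ -!/(fsubst _ _) fsubst_fvar; last by lia.
by rewrite (IH k.+1) ?(IH k) //; lia.
Qed.

Theorem mainTheorem4 (R : comNzRingType) (N : nat) (v beta : nat -> R) :
  (3 <= N)%N ->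
  (exists At : {poly R}, Aent v beta N = Bent v beta N * (v 1%N)%:P + At * 'X)
  /\ (N = 3%N ->
      Aent v beta N = Bent v beta N * (v 1%N)%:P + (v 2%N + v 3%N)%:P * 'X)
  /\ ((4 <= N)%N ->
      Aent v beta N = Bent v beta N * (v 1%N)%:P
        + fsubst v (Lprod beta 2 (N - 2) (fmono R N 2)) * 'X)
  /\ Bent v beta N = fsubst v (Lprod beta 1 (N - 2) (fmono R N 1)).
Proof.
move=> N3; have [k ->] : exists k, N = k.+3 by exists (N - 3)%N; lia.
have A_eq := Aent_continuant v beta k.+1.
have B_eq := Bent_continuant v beta k.+2.
have A_L : fsubst v (Lfmono beta k.+3 2) = continuant (fsum v) (lambda_shift beta) 2 k.+1.
  exact: fsubst_Lfmono.
have B_L : fsubst v (Lfmono beta k.+3 1) = continuant (fsum v) (lambda_shift beta) 1 k.+2.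
  exact: fsubst_Lfmono.
split; first by eexists; exact: A_eq.
split; first by case=> k0; rewrite A_eq k0.
split; first by rewrite A_eq -A_L.
by rewrite B_eq -B_L.
Qed.
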